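(* Let $p=0$, $\alpha\in[0,1]$, $0\le h_1<\dots<h_N\le1$, and nonnegative weights $f_0^S(h_j),f_0^{NS}(h_j)$, $j=1,\dots,N$, each summing to $1$; set $f_0(h_j)=\alpha f_0^S(h_j)+(1-\alpha)f_0^{NS}(h_j)$ and assume $f_0(h_N)>0$; write $f_0([h_i,1])=\sum_{j\ge i}f_0(h_j)$, $f_0^S([h_i,1])=\sum_{j\ge i}f_0^S(h_j)$, $f_0^{NS}([h_i,1])=\sum_{j\ge i}f_0^{NS}(h_j)$. Let $m_0^{S,j}\in[-1,1]$ be given. Let $f^{NS,1},\dots,f^{NS,N}\in C([0,+\infty),P([-1,1]))$ (weak topology) with initial data $f_0^{NS,i}$, write $m^{NS,j}(t)=\int_{-1}^1w\,f^{NS,j}(t,dw)$, $$\beta_i(t)=\alpha\sum_{j\ge i}f_0^S(h_j)m_0^{S,j}+(1-\alpha)\sum_{j\ge i}f_0^{NS}(h_j)m^{NS,j}(t),$$ and assume that for all $i$, $t\ge0$ and $\phi\in C^1([-1,1])$, $$\int\phi\,df^{NS,i}(t)=\int\phi\,df_0^{NS,i}+\int_0^t\!\!\int_{-1}^1\phi'(w)\big(\beta_i(s)-f_0([h_i,1])w\big)f^{NS,i}(s,dw)\,ds.$$ Define $$m_\infty^{NS,N}=\begin{cases}\int_{-1}^1w\,f_0^{NS,N}(dw)&\text{if }\alpha f_0^S(h_N)=0,\\ m_0^{S,N}&\text{if }\alpha f_0^S(h_N)>0,\end{cases}$$ and recursively for $i=N-1,\dots,1$, $$m_\infty^{NS,i}=\frac{(1-\alpha)\sum_{j\ge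 i+1}f_0^{NS}(h_j)m_\infty^{NS,j}+\alpha\sum_{j\ge i}f_0^S(h_j)m_0^{S,j}}{\alpha f_0^S([h_i,1])+(1-\alpha)f_0^{NS}([h_{i+1},1])}.$$ Then $f^{NS,i}(t)\to\delta_{m_\infty^{NS,i}}$ weakly as $t\to+\infty$ for every $i=1,\dots,N$. In particular, if $\alpha f_0^S(h_i)=0$ for all $i=1,\dots,N-1$ (no stubborn individuals at levels $h_1,\dots,h_{N-1}$), then $m_\infty^{NS,i}=m_\infty^{NS,N}$ for $i=1,\dots,N-1$.
   Context: $P([-1,1])$ is the set of Borel probability measures on $[-1,1]$; $\delta_x$ is the Dirac mass at $x$. Interpretation: $f^{NS,i}(t)$ is the opinion distribution of non-stubborn individuals at hierarchy level $h_i$, $\alpha f_0^S(h_j)$ (resp. $(1-\alpha)f_0^{NS}(h_j)$) the proportion of stubborn (resp. non-stubborn) individuals at level $h_j$, $m_0^{S,j}$ the mean opinion of stubborn individuals at level $h_j$. The case $p=0$ means hierarchy is strictly respected. *)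

From HB Require Import structures.
From mathcomp Require Import all_boot all_order all_algebra.
From mathcomp Require Import all_classical all_reals all_analysis.
Set Implicit Arguments. Unset Strict Implicit. Unset Printing Implicit Defensive.
Import Order.TTheory GRing.Theory Num.Theory.
Import numFieldNormedType.Exports.
Local Open Scope classical_set_scope.
Local Open Scope ring_scope.

Section Defs.
Variable R : realType.

(* Elements of P([-1,1]) are represented by probability measures on R
   giving full mass to [-1,1]. *)
Definition supported_in_I (mu : probability R R) : Prop :=
  mu `[-1, 1]%classic = 1%E.

Definition integI (mu : probability R R) (phi : R -> R) : R :=
  Rintegral mu `[-1, 1]%classic phi.

(* C^1 test functions (restrictions of C^1(R) functions to [-1,1]) *)
Definition C1fun (phi : R -> R) : Prop :=
  (forall x, derivable phi x 1) /\ continuous (derive1 phi).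

Definition CIfun (phi : R -> R) : Prop := {within `[-1, 1]%classic, continuous phi}.

Variable n : nat. (* N = n.+1 hierarchy levels, indexed by 'I_n.+1 *)

Definition tail (g : 'I_n.+1 -> R) (i : 'I_n.+1) : R :=
  \sum_(j < n.+1 | (i <= j)%N) g j.

Definition stail (g : 'I_n.+1 -> R) (i : 'I_n.+1) : R :=
  \sum_(j < n.+1 | (i < j)%N) g j.

Variables (alpha : R) (fS fNS : 'I_n.+1 -> R) (mS : 'I_n.+1 -> R) (mN0 : R).

Definition minf_last : R :=
  if alpha * fS ord_max == 0 then mN0 else mS ord_max.

Definition minf_step (prev : 'I_n.+1 -> R) (i : 'I_n.+1) : R :=
  if i == ord_max then minf_last
  else ((1 - alpha) * stail (fun j => fNS j * prev j) i
        + alpha * tail (fun j => fS j * mS j) i)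
       / (alpha * tail fS i + (1 - alpha) * stail fNS i).

(* m_infty^{NS,i}: the backward recursion i = N, N-1, ..., 1; after k
   iterations the values at the k top indices are the correct ones, so
   n.+1 iterations compute all of them. *)
Definition minf : 'I_n.+1 -> R := iter n.+1 minf_step (fun _ => 0).

End Defs.

From HB Require Import structures.
From mathcomp Require Import all_boot all_order all_algebra.
From mathcomp Require Import all_classical all_reals all_analysis.
From mathcomp Require Import measurable_realfun ring lra zify.
Import Order.TTheory GRing.Theory Num.Theory.
Import numFieldNormedType.Exports.
Local Open Scope classical_set_scope.
Local Open Scope ring_scope.

(* Testing the equation against [w] and [w ^+ 2] shows that the mean and the
   second moment of [f^{NS,i}] solve linear equations [x' = g - D x] whose
   forcing [g] only involves the means of the levels [j > i], with [D > 0]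
   except at the top level when it has no stubborn individuals (there the mean
   is constant).  Since [x -> L / D] whenever [g -> L], a downward induction on
   [i] shows that the means converge to [m_infty^{NS,i}] and the second moments
   to its square.  A vanishing variance forces weak convergence to the Dirac
   mass, because a continuous [phi] satisfies
   [|phi w - phi c| <= e + K (w - c)^2] on [[-1, 1]]. *)

Section LinearODE.
Context {R : realType}.
Notation mu := (@lebesgue_measure R).

Lemma integral_equation_is_derive (x h : R -> R) :
  {within `[0, +oo[, continuous h} ->
  (forall t : R, 0 <= t -> x t = x 0 + \int[mu]_(s in `[0, t]) h s) ->
  forall t : R, 0 < t -> is_derive t 1 x (h t).
Proof.
move=> ch xE t t0.
pose X s := x 0 + \int[mu]_(u in `[0, s]) h u.
have hint : mu.-integrable `[0, t + 1] (EFin \o h).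
  apply: continuous_compact_integrable; first exact: segment_compact.
  apply: continuous_subspaceW ch => s.
  by rewrite /= !in_itv /= => /andP[-> _].
have ht : {for t, continuous h}.
  have : {within `]0, +oo[, continuous h}.
    apply: continuous_subspaceW ch => s.
    by rewrite /= !in_itv /= !andbT; exact: ltW.
  rewrite continuous_open_subspace; last exact: interval_open.
  by apply; rewrite inE /= in_itv /= t0.
have t_lt : t < t + 1 by rewrite ltrDl.
have [dF F'] := continuous_FTC1_closed t_lt hint t0 ht.
have dX : is_derive t 1 X (h t).
  rewrite -[h t]add0r; apply: is_deriveD.
  by rewrite -F' derive1E; exact: derivableP.
apply: near_eq_is_derive dX; near=> s.
by rewrite /X -xE // ltW //; near: s; exact: lt_nbhsr.
Unshelve. all: by end_near.
Qed.

Lemma le_expR_weighted (f df : R -> R) (D T t : R) : 0 < T -> T <= t ->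
  (forall s : R, 0 < s -> is_derive s 1 f (df s)) ->
  (forall s, T < s -> 0 <= df s + D * f s) ->
  expR (D * T) * f T <= expR (D * t) * f t.
Proof.
move=> T0 Tt fd dfD.
have eD (s : R) : 0 < s -> is_derive s 1 (fun s => expR (D * s) * f s)
                                   (expR (D * s) * (df s + D * f s)).
  move=> s0; have dD : is_derive s 1 (fun s => D * s) D.
    exact: is_derive_eq (is_deriveZ D (is_derive_id s 1)) (mulr1 D).
  have dE : is_derive s 1 (fun s => expR (D * s)) (expR (D * s) * D).
    exact: (is_derive1_comp (f := expR) (g := fun s => D * s)).
  apply: (trigger_derive (f := fun s => expR (D * s) * f s)) (is_deriveM dE (fd s s0)) _.
  by rewrite /GRing.scale /=; ring.
have tI : t \in `[T, t] by rewrite in_itv /= Tt lexx.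
have TI : T \in `[T, t] by rewrite in_itv /= Tt lexx.
apply: (ger0_derive1_le_cc (f := fun s => expR (D * s) * f s)) TI tI Tt.
- move=> s; rewrite in_itv /= => /andP[Ts _].
  by have [] := eD s (lt_trans T0 Ts).
- move=> s; rewrite in_itv /= => /andP[Ts _].
  have eDs := eD s (lt_trans T0 Ts); rewrite derive1E derive_val.
  by rewrite mulr_ge0 ?expR_ge0 ?dfD.
- apply: continuous_in_subspaceT => s; rewrite inE /= in_itv /= => /andP[Ts _].
  have [ds _] := eD s (lt_le_trans T0 Ts).
  exact/differentiable_continuous/derivable1_diffP.
Qed.

Section Solution.
Variables (x g : R -> R) (D L : R).
Hypothesis D_gt0 : 0 < D.
Hypothesis x_derive : forall t : R, 0 < t -> is_derive t 1 x (g t - D * x t).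

(* Beyond [T], with [z := x - L / D], [expR (D s) * (z s + c)] increases and
   [expR (D s) * (c - z s)] decreases. *)
Lemma linear_ode_dist_le {c T : R} : 0 < T -> 0 <= c ->
  (forall s, T < s -> `|g s - L| <= c * D) ->
  forall t, T <= t -> `|x t - L / D| <= c + expR (D * (T - t)) * `|x T - L / D|.
Proof.
move=> T0 c0 gL t Tt.
pose z s := x s - L / D.
have zE s : g s - D * x s = (g s - L) - D * z s.
  by rewrite /z; field; exact: lt0r_neq0.
have lo : expR (D * T) * (z T + c) <= expR (D * t) * (z t + c).
  apply: (le_expR_weighted (fun s => z s + c) (fun s => g s - D * x s)) => // [s s0|s Ts].
    apply: (trigger_derive (f := fun s => z s + c)) (is_deriveD (is_deriveB
      (x_derive s s0) (is_derive_cst (L / D) s 1)) (is_derive_cst c s 1)) _.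
    by rewrite subr0 addr0.
  have /ler_normlP[] := gL s Ts; rewrite zE; lra.
have hi : expR (D * T) * (c - z T) <= expR (D * t) * (c - z t).
  apply: (le_expR_weighted (fun s => c - z s) (fun s => - (g s - D * x s))) => // [s s0|s Ts].
    apply: (trigger_derive (f := fun s => c - z s)) (is_deriveB (is_derive_cst c s 1)
      (is_deriveB (x_derive s s0) (is_derive_cst (L / D) s 1))) _.
    by rewrite subr0 sub0r.
  have /ler_normlP[] := gL s Ts; rewrite zE; lra.
have eT : expR (D * T) = expR (D * (T - t)) * expR (D * t).
  by rewrite -expRD; congr expR; ring.
have Et0 := expR_gt0 (D * t).
rewrite eT mulrAC [X in X <= _]mulrC ler_pM2l // in lo.
rewrite eT mulrAC [X in X <= _]mulrC ler_pM2l // in hi.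
have E0 := expR_gt0 (D * (T - t)).
have := ler_wpM2l (ltW E0) (ler_norm (z T)).
have := ler_wpM2l (ltW E0) (lerNnormlW (lexx `|z T|)).
have := mulr_ge0 (ltW E0) c0.
rewrite -/(z t) ler_norml; lra.
Qed.

Lemma linear_ode_cvg : g t @[t --> +oo] --> L -> x t @[t --> +oo] --> L / D.
Proof.
move=> gL; apply/cvgrPdist_le => e e0.
have e2D : 0 < e / 2 * D by rewrite mulr_gt0 ?divr_gt0.
have /cvgrPdist_le /(_ _ e2D) [M [_ gM]] := gL.
pose T := Num.max M 0 + 1.
have T0 : 0 < T by rewrite /T ltr_pwDr // le_max lexx orbT.
have MT : M < T by rewrite /T ltr_pwDr // le_max lexx.
have gT s : T < s -> `|g s - L| <= e / 2 * D.
  by move=> Ts; rewrite distrC; apply: gM; exact: lt_trans Ts.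
have decay : expR (D * (T - t)) * `|x T - L / D| @[t --> +oo] --> 0.
  rewrite -[0](mul0r `|x T - L / D|); apply: cvgMl.
  have -> : (fun t => expR (D * (T - t))) = (fun u => expR (- u)) \o (fun t => D * (t - T)).
    by apply/funext => t /=; congr expR; ring.
  apply: (cvg_comp _ _ _ (@cvgr_expR R)); apply/cvgryPge => A; near=> t.
  rewrite -ler_pdivrMl // lerBrDr; near: t; exact: nbhs_pinfty_ge (num_real _).
near=> t.
rewrite distrC (splitr e); apply: le_trans (linear_ode_dist_le T0 _ gT _ _) _.
- by rewrite ltW // divr_gt0.
- by near: t; exact: nbhs_pinfty_ge (num_real _).
rewrite lerD2l ltW //; near: t; apply: cvgr_lt decay _ _.
by rewrite divr_gt0.
Unshelve. all: by end_near.
Qed.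

End Solution.

Lemma integral_linear_ode_cvg (x g : R -> R) (D L : R) : 0 < D ->
  {within `[0, +oo[, continuous x} -> {within `[0, +oo[, continuous g} ->
  (forall t : R, 0 <= t -> x t = x 0 + \int[mu]_(s in `[0, t]) (g s - D * x s)) ->
  g t @[t --> +oo] --> L -> x t @[t --> +oo] --> L / D.
Proof.
move=> D0 cx cg xE; apply: linear_ode_cvg => //.
apply: integral_equation_is_derive xE => t.
by apply: cvgB; [exact: cg | apply: cvgM; [exact: cvg_cst | exact: cx]].
Qed.

End LinearODE.

Section MeasuresOnI.
Context {R : realType}.
Implicit Types (mu : probability R R) (phi psi : R -> R) (a b c : R).

Let measurable_I : measurable (`[-1, 1] : set R).
Proof. exact: measurable_itv. Qed.

Let CIfun_id : CIfun (@id R).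
Proof. by apply: continuous_subspaceT => w; exact: cvg_id. Qed.

Lemma continuous_CIfun {phi : R -> R} : continuous phi -> CIfun phi.
Proof. exact: continuous_subspaceT. Qed.

Lemma C1fun_id : C1fun (@id R).
Proof.
split; first by move=> x; exact: derivable_id.
rewrite (_ : derive1 id = cst 1); first exact: cst_continuous.
by apply/funext => x; exact: derive1_id.
Qed.

Lemma C1fun_sqr : C1fun (fun w : R => w ^+ 2).
Proof.
split; first by move=> x; exact: exprn_derivable.
rewrite (_ : derive1 _ = fun w => 2 * w); last by apply/funext => x; rewrite exp_derive1 expr1.
by move=> x; apply: cvgMr; exact: cvg_id.
Qed.

Lemma CIfun_integrable mu phi : CIfun phi -> mu.-integrable `[-1, 1] (EFin \o phi).
Proof.
move=> cphi; apply: measurable_bounded_integrable => //.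
- by apply: le_lt_trans (probability_le1 _ measurable_I) _; exact: ltry.
- exact: subspace_continuous_measurable_fun.
- have [M [_ HM]] := compact_bounded (continuous_compact cphi (@segment_compact R (-1) 1)).
  by exists M; split; rewrite ?num_real // => ? ? ? ?; exact: HM.
Qed.

Lemma eq_integI mu phi psi :
  (forall w, -1 <= w <= 1 -> phi w = psi w) -> integI mu phi = integI mu psi.
Proof. by move=> e; apply: eq_Rintegral => w; rewrite inE /= in_itv /= => /e. Qed.

Lemma le_integI mu phi psi : CIfun phi -> CIfun psi ->
  (forall w, -1 <= w <= 1 -> phi w <= psi w) -> integI mu phi <= integI mu psi.
Proof.
by move=> cphi cpsi phi_le; apply: le_Rintegral; rewrite ?CIfun_integrable.
Qed.

Lemma integI_cst mu c : supported_in_I mu -> integI mu (fun=> c) = c.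
Proof.
by move=> s; rewrite /integI Rintegral_cst // [X in _ * X](congr1 fine s) mulr1.
Qed.

Lemma integID mu phi psi : CIfun phi -> CIfun psi ->
  integI mu (fun w => phi w + psi w) = integI mu phi + integI mu psi.
Proof. by move=> cphi cpsi; rewrite /integI RintegralD ?CIfun_integrable. Qed.

Lemma integIZ mu a phi : CIfun phi -> integI mu (fun w => a * phi w) = a * integI mu phi.
Proof. by move=> cphi; rewrite /integI RintegralZl ?CIfun_integrable. Qed.

Lemma integI_quadratic mu a b c : supported_in_I mu ->
  integI mu (fun w => a + b * w + c * w ^+ 2) =
  a + b * integI mu id + c * integI mu (fun w => w ^+ 2).
Proof.
move=> s; have csq : CIfun (fun w : R => w ^+ 2) := continuous_CIfun (exprn_continuous (n:=2)).
rewrite integID; last by move=> w; apply: cvgMr; exact: csq.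
  by rewrite integID ?integI_cst ?integIZ // => w; [exact: cvg_cst | apply: cvgMr; exact: CIfun_id].
by move=> w; apply: cvgD; [exact: cvg_cst | apply: cvgMr; exact: CIfun_id].
Qed.

Lemma integI_id_itv mu : supported_in_I mu -> -1 <= integI mu id <= 1.
Proof.
move=> s; have ccst c : CIfun (fun=> c) by apply: continuous_CIfun => w; exact: cvg_cst.
apply/andP; split.
  by rewrite -[leLHS](integI_cst _ (-1) s); apply: le_integI => // w /andP[].
by rewrite -[leRHS](integI_cst _ 1 s); apply: le_integI => // w /andP[].
Qed.

Lemma CIfun_quadratic_majorant {phi c e} : CIfun phi -> -1 <= c <= 1 -> 0 < e ->
  exists2 K, 0 <= K &
    forall w, -1 <= w <= 1 -> `|phi w - phi c| <= e + K * (w - c) ^+ 2.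
Proof.
move=> cphi cI e0.
have [M [_ HM]] := compact_bounded (continuous_compact cphi (@segment_compact R (-1) 1)).
have phiB w : -1 <= w <= 1 -> `|phi w| <= `|M| + 1.
  move=> wI; apply: (HM (`|M| + 1)); last by exists w => //; rewrite /= in_itv.
  by have := ler_norm M; lra.
have cI' : `[-1, 1]%classic c by rewrite /= in_itv.
have /subspace_continuousP /(_ c cI') /cvgrPdist_lt /(_ e e0) /nbhs_normP [d d0 phid] := cphi.
pose K := 2 * (`|M| + 1) / d ^+ 2.
have K0 : 0 <= K by rewrite divr_ge0 ?sqr_ge0 // mulr_ge0 // addr_ge0.
exists K => // w wI.
have Kw : 0 <= K * (w - c) ^+ 2 by rewrite mulr_ge0 ?sqr_ge0.
have [wc|cw] := ltP `|c - w| d.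
  by have := phid w wc wI; rewrite distrC /=; lra.
have d2 : d ^+ 2 <= (w - c) ^+ 2.
  rewrite -normrN opprB in cw.
  by rewrite -(real_normK (num_real (w - c))) !expr2 ler_pM // ltW.
have Kd : K * d ^+ 2 = 2 * (`|M| + 1) by rewrite divfK // sqrf_eq0 gt_eqF.
have := ler_wpM2l K0 d2; have := ler_normB (phi w) (phi c).
have := phiB w wI; have := phiB c cI; lra.
Qed.

Lemma integI_dist_le {mu phi c e K} : supported_in_I mu -> CIfun phi ->
  (forall w, -1 <= w <= 1 -> `|phi w - phi c| <= e + K * (w - c) ^+ 2) ->
  `|integI mu phi - phi c| <=
    e + K * (integI mu (fun w => w ^+ 2) - 2 * c * integI mu id + c ^+ 2).
Proof.
move=> s cphi maj.
have cd : CIfun (fun w => phi w - phi c).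
  by move=> w; apply: cvgB; [exact: cphi | exact: cvg_cst].
have -> : integI mu phi - phi c = integI mu (fun w => phi w - phi c).
  by rewrite integID ?integI_cst // => w; exact: cvg_cst.
apply: le_trans (le_normr_Rintegral _ (CIfun_integrable mu _ cd)) _ => //.
have -> : e + K * (integI mu (fun w => w ^+ 2) - 2 * c * integI mu id + c ^+ 2) =
    integI mu (fun w => (e + K * c ^+ 2) + (- (2 * K * c)) * w + K * w ^+ 2).
  by rewrite integI_quadratic //; ring.
apply: le_integI => [w||w wI].
- by apply: cvg_norm; exact: cd.
- apply: continuous_CIfun => w; apply: cvgD; last by apply: cvgMr; exact: exprn_continuous.
  by apply: cvgD; [exact: cvg_cst | apply: cvgMr; exact: cvg_id].
- by rewrite [leRHS](_ : _ = e + K * (w - c) ^+ 2) ?maj //; ring.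
Qed.

Lemma integI_cvg_dirac (mu_ : R -> probability R R) c :
  (forall t, 0 <= t -> supported_in_I (mu_ t)) ->
  integI (mu_ t) id @[t --> +oo] --> c ->
  integI (mu_ t) (fun w => w ^+ 2) @[t --> +oo] --> c ^+ 2 ->
  forall phi, CIfun phi -> integI (mu_ t) phi @[t --> +oo] --> phi c.
Proof.
move=> s m1 m2 phi cphi.
have s_near : \forall t \near +oo, supported_in_I (mu_ t).
  by near=> t; apply: s; near: t; exact: nbhs_pinfty_ge (num_real _).
have cI : -1 <= c <= 1.
  by apply/andP; split; [apply: (cvgr_to_ge m1) | apply: (cvgr_to_le m1)];
    exists 0; split; rewrite ?num_real // => t /ltW /s /integI_id_itv /andP[].
apply/cvgrPdist_le => e e0.
have e2 : 0 < e / 2 by rewrite divr_gt0.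
have [K K0 maj] := CIfun_quadratic_majorant cphi cI e2.
have Q : e / 2 + K * (integI (mu_ t) (fun w => w ^+ 2) - 2 * c * integI (mu_ t) id + c ^+ 2)
    @[t --> +oo] --> e / 2.
  rewrite -[X in _ --> X]addr0 -[X in _ + X](mulr0 K).
  rewrite -[X in K * X](_ : c ^+ 2 - 2 * c * c + c ^+ 2 = 0); last by ring.
  apply: cvgD; first exact: cvg_cst.
  by apply: cvgMr; apply: cvgD; [apply: cvgB => //; apply: cvgMr | exact: cvg_cst].
near=> t.
rewrite distrC; apply: le_trans (integI_dist_le _ cphi maj) _; first by near: t.
by apply: ltW; near: t; apply: cvgr_lt Q _ _; rewrite ltr_pdivrMr //; lra.
Unshelve. all: by end_near.
Qed.

End MeasuresOnI.

Lemma ord_downward_ind n (P : 'I_n.+1 -> Prop) :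
  (forall i : 'I_n.+1, (forall j : 'I_n.+1, (i < j)%N -> P j) -> P i) ->
  forall i, P i.
Proof.
move=> IH i; have [k] := ubnP (n - i); elim: k i => [|k IHk] i ik.
  by rewrite ltn0 in ik.
by apply: IH => j ij; apply: IHk; have := ltn_ord j; lia.
Qed.

Section Tails.
Context {R : realType} {n : nat}.
Implicit Types (u : 'I_n.+1 -> R) (i : 'I_n.+1).

Lemma tail_stail u i : tail u i = u i + stail u i.
Proof.
rewrite /tail /stail (bigD1 i) //=; congr (_ + _).
by apply: eq_bigl => j; rewrite ltn_neqAle andbC eq_sym.
Qed.

Lemma stail_max u : stail u ord_max = 0.
Proof. by rewrite /stail big_pred0 // => j /=; rewrite ltnNge -ltnS ltn_ord. Qed.

Lemma tail_max u : tail u ord_max = u ord_max.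
Proof. by rewrite tail_stail stail_max addr0. Qed.

Lemma le_tail_max u i : (forall j, 0 <= u j) -> u ord_max <= tail u i.
Proof.
move=> u_ge0; rewrite /tail (bigD1 ord_max) /= ?leq_ord // lerDl.
by apply: sumr_ge0 => j _.
Qed.

Lemma le_stail_max u i : (forall j, 0 <= u j) -> i != ord_max -> u ord_max <= stail u i.
Proof.
move=> u_ge0 iN; rewrite /stail (bigD1 ord_max) /=; last first.
  by rewrite ltn_neqAle leq_ord andbT; apply: contra iN => /eqP eq_i; apply/eqP/val_inj.
by rewrite lerDl; apply: sumr_ge0 => j _.
Qed.

End Tails.

Section BackwardRecursion.
Context {R : realType} {n : nat}.
Variables (alpha : R) (fS fNS mS : 'I_n.+1 -> R) (m0 : R).
Implicit Types (p : 'I_n.+1 -> R) (i j : 'I_n.+1).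

Local Notation m_inf := (minf alpha fS fNS mS m0).

Definition relax_rate i := alpha * tail fS i + (1 - alpha) * stail fNS i.

Definition forcing p i :=
  alpha * tail (fun j => fS j * mS j) i + (1 - alpha) * stail (fun j => fNS j * p j) i.

Lemma relax_rate_max : relax_rate ord_max = alpha * fS ord_max.
Proof. by rewrite /relax_rate tail_max stail_max mulr0 addr0. Qed.

Lemma forcing_max p : forcing p ord_max = alpha * fS ord_max * mS ord_max.
Proof. by rewrite /forcing tail_max stail_max mulr0 addr0 mulrA. Qed.

Lemma tail_f0 i : tail (fun j => alpha * fS j + (1 - alpha) * fNS j) i =
  relax_rate i + (1 - alpha) * fNS i.
Proof.
rewrite /relax_rate /tail big_split /= -!mulr_sumr -/(tail fNS i) tail_stail.
by rewrite -/(tail fS i); ring.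
Qed.

Lemma cvg_forcing {T : Type} (F : set_system T) {FF : Filter F}
    (p : 'I_n.+1 -> T -> R) (l : 'I_n.+1 -> R) i :
  (forall j, (i < j)%N -> p j t @[t --> F] --> l j) ->
  forcing (fun j => p j t) i @[t --> F] --> forcing l i.
Proof.
move=> pl; apply: cvgD; first exact: cvg_cst.
apply: cvgMr; apply: (@cvg_big _ _ +%R 0 _ add_continuous) => // j ij.
by apply: cvgMr; exact: pl.
Qed.

(* [m_inf] iterates [minf_step] [n.+1] times, and the value at [i] is already
   final after [n - i + 1] iterations. *)
Lemma minfE i : m_inf i = minf_step alpha fS fNS mS m0 m_inf i.
Proof.
pose S k := iter k (minf_step alpha fS fNS mS m0) (fun=> 0).
have step_ext p q j : (forall k : 'I_n.+1, (j < k)%N -> p k = q k) ->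
    minf_step alpha fS fNS mS m0 p j = minf_step alpha fS fNS mS m0 q j.
  move=> pq; rewrite /minf_step; case: ifP => // _.
  by congr (((1 - alpha) * _ + _) / _); apply: eq_bigr => k jk; rewrite pq.
suff S_stable k j : (n - j < k)%N -> S k.+1 j = S k j.
  by symmetry; apply: (S_stable n.+1); have := ltn_ord i; lia.
elim: k j => [//|k IHk] j jk; rewrite /S !iterS; apply: step_ext => l jl.
by apply: IHk; have := ltn_ord l; lia.
Qed.

Hypothesis alpha_itv : 0 <= alpha <= 1.
Hypothesis fS_ge0 : forall j, 0 <= fS j.
Hypothesis fNS_ge0 : forall j, 0 <= fNS j.
Hypothesis f0_max_gt0 : 0 < alpha * fS ord_max + (1 - alpha) * fNS ord_max.

Let alpha_ge0 : 0 <= alpha. Proof. by case/andP: alpha_itv. Qed.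
Let onem_alpha_ge0 : 0 <= 1 - alpha. Proof. by case/andP: alpha_itv; rewrite subr_ge0. Qed.

Lemma relax_rate_gt0 i : i != ord_max -> 0 < relax_rate i.
Proof.
move=> iN; apply: lt_le_trans f0_max_gt0 _.
by rewrite lerD // ler_wpM2l ?le_tail_max ?le_stail_max.
Qed.

Lemma tail_f0_gt0 i : 0 < tail (fun j => alpha * fS j + (1 - alpha) * fNS j) i.
Proof.
apply: lt_le_trans f0_max_gt0 _; apply: le_tail_max => j.
by rewrite addr_ge0 ?mulr_ge0.
Qed.

Lemma relax_rate_minf i : relax_rate i * m_inf i = forcing m_inf i.
Proof.
rewrite minfE /minf_step; have [->|iN] := eqVneq i ord_max.
  rewrite relax_rate_max forcing_max /minf_last.
  by case: eqP => [->|_]; rewrite ?mul0r ?mulrA.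
by rewrite -/(relax_rate i) addrC mulrC divfK // gt_eqF // relax_rate_gt0.
Qed.

Lemma minf_const : (forall i, i != ord_max -> alpha * fS i = 0) ->
  forall i, m_inf i = m_inf ord_max.
Proof.
move=> no_stubborn; apply: ord_downward_ind => i IH.
have [->//|iN] := eqVneq i ord_max.
have tail_S u : alpha * tail (fun j => fS j * u j) i = alpha * fS ord_max * u ord_max.
  rewrite /tail mulr_sumr (bigD1 ord_max) /= ?leq_ord // big1 ?addr0 ?mulrA //.
  by move=> j /andP[_ jN]; rewrite mulrA no_stubborn // mul0r.
have tail_fS : alpha * tail fS i = alpha * fS ord_max.
  by have := tail_S (fun=> 1); rewrite mulr1 /tail; under eq_bigr do rewrite mulr1.
have stail_m : stail (fun j => fNS j * m_inf j) i = stail fNS i * m_inf ord_max.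
  by rewrite /stail mulr_suml; apply: eq_bigr => j ij; rewrite IH.
have rate_max := relax_rate_minf ord_max; rewrite relax_rate_max forcing_max in rate_max.
apply: (mulfI (lt0r_neq0 (relax_rate_gt0 _ iN))).
rewrite relax_rate_minf /forcing /relax_rate tail_S stail_m tail_fS -rate_max; ring.
Qed.

End BackwardRecursion.

Section Convergence.
Context {R : realType} {n : nat}.
Variables (alpha : R) (fS fNS mS : 'I_n.+1 -> R).
Variables (f0NS : 'I_n.+1 -> probability R R) (fNSt : 'I_n.+1 -> R -> probability R R).
Hypothesis alpha_itv : 0 <= alpha <= 1.
Hypothesis fS_ge0 : forall j, 0 <= fS j.
Hypothesis fNS_ge0 : forall j, 0 <= fNS j.
Hypothesis f0_max_gt0 : 0 < alpha * fS ord_max + (1 - alpha) * fNS ord_max.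
Hypothesis fNSt_supp : forall i t, 0 <= t -> supported_in_I (fNSt i t).
Hypothesis fNSt0 : forall i, fNSt i 0 = f0NS i.
Hypothesis fNSt_cont : forall i phi, CIfun phi ->
  {within `[0, +oo[%classic, continuous (fun t => integI (fNSt i t) phi)}.
Hypothesis fNSt_weak :
  (let f0 := fun j => alpha * fS j + (1 - alpha) * fNS j in
   let mNS := fun j t => integI (fNSt j t) id in
   let beta := fun i t =>
     alpha * tail (fun j => fS j * mS j) i
     + (1 - alpha) * tail (fun j => fNS j * mNS j t) i in
   forall i t phi, 0 <= t -> C1fun phi ->
     integI (fNSt i t) phi =
     integI (f0NS i) phi
     + Rintegral lebesgue_measure `[0, t]%classic
         (fun s => integI (fNSt i s)
                     (fun w => derive1 phi w * (beta i s - tail f0 i * w)))).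

Let alpha_ge0 : 0 <= alpha. Proof. by case/andP: alpha_itv. Qed.

Local Notation m_inf := (minf alpha fS fNS mS (integI (f0NS ord_max) id)).
Local Notation rate := (relax_rate alpha fS fNS).
Local Notation forcing := (forcing alpha fS fNS mS).
Local Notation f0tail := (tail (fun j => alpha * fS j + (1 - alpha) * fNS j)).

Definition opinion_mean j t := integI (fNSt j t) id.
Definition opinion_moment2 j t := integI (fNSt j t) (fun w => w ^+ 2).
Definition influence i t :=
  alpha * tail (fun j => fS j * mS j) i
  + (1 - alpha) * tail (fun j => fNS j * opinion_mean j t) i.

Local Notation mean := opinion_mean.
Local Notation moment2 := opinion_moment2.

Let influence_forcing i t :
  influence i t = forcing (mean^~ t) i + (1 - alpha) * fNS i * mean i t.
Proof. by rewrite /influence (tail_stail (fun j => fNS j * mean j t)) /forcing; ring. Qed.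

Let mean_eq i t : 0 <= t ->
  mean i t = mean i 0 + \int[lebesgue_measure]_(s in `[0, t])
                          (forcing (mean^~ s) i - rate i * mean i s).
Proof.
move=> t0; rewrite {1}/mean (fNSt_weak i t id t0 C1fun_id) {1}/mean fNSt0.
congr (_ + _); apply: eq_Rintegral => s; rewrite inE /= in_itv /= => /andP[s0 _].
rewrite (@eq_integI _ _ _ (fun w => influence i s + (- f0tail i) * w + 0 * w ^+ 2)); last first.
  by move=> w _; rewrite derive1_id /influence; ring.
rewrite integI_quadratic; last exact: fNSt_supp.
by rewrite influence_forcing tail_f0 -/(mean i s); ring.
Qed.

Let moment2_eq i t : 0 <= t ->
  moment2 i t = moment2 i 0 + \int[lebesgue_measure]_(s in `[0, t])
                   (2 * influence i s * mean i s - 2 * f0tail i * moment2 i s).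
Proof.
move=> t0; rewrite {1}/moment2 (fNSt_weak i t _ t0 C1fun_sqr) {1}/moment2 fNSt0.
congr (_ + _); apply: eq_Rintegral => s; rewrite inE /= in_itv /= => /andP[s0 _].
rewrite (@eq_integI _ _ _
    (fun w => 0 + (2 * influence i s) * w + (- (2 * f0tail i)) * w ^+ 2)); last first.
  by move=> w _; rewrite exp_derive1 expr1 /GRing.scale /influence /=; ring.
rewrite integI_quadratic; last exact: fNSt_supp.
by rewrite -/(mean i s) -/(moment2 i s); ring.
Qed.

Let mean_cont j : {within `[0, +oo[, continuous (mean j)}.
Proof. by apply: fNSt_cont; apply: continuous_CIfun => w; exact: cvg_id. Qed.

Let moment2_cont j : {within `[0, +oo[, continuous (moment2 j)}.
Proof. exact/fNSt_cont/continuous_CIfun/exprn_continuous. Qed.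

Let forcing_mean_cont i : {within `[0, +oo[, continuous (fun t => forcing (mean^~ t) i)}.
Proof. by move=> t; apply: cvg_forcing => j _; exact: mean_cont. Qed.

Let influence_cont i : {within `[0, +oo[, continuous (influence i)}.
Proof.
have -> : influence i = fun t => forcing (mean^~ t) i + (1 - alpha) * fNS i * mean i t.
  by apply/funext => t; exact: influence_forcing.
by move=> t; apply: cvgD; [exact: forcing_mean_cont | apply: cvgMr; exact: mean_cont].
Qed.

Let mean_cvg_step (i : 'I_n.+1) :
  (forall j : 'I_n.+1, (i < j)%N -> mean j t @[t --> +oo] --> m_inf j) ->
  mean i t @[t --> +oo] --> m_inf i.
Proof.
move=> IH; have [rate_gt0|rate_le0] := ltP 0 (rate i).
  rewrite -[m_inf i](mulKf (lt0r_neq0 rate_gt0)) mulrC relax_rate_minf //.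
  apply: integral_linear_ode_cvg rate_gt0 (mean_cont i) (forcing_mean_cont i) (mean_eq i) _.
  exact: cvg_forcing.
(* A vanishing rate only occurs at the top level without stubborn individuals,
   where the mean is constant. *)
have [iN|/relax_rate_gt0 rate_gt0] := eqVneq i ord_max; last first.
  by move: rate_le0; rewrite leNgt rate_gt0.
move: iN rate_le0 => ->; rewrite relax_rate_max => rate_le0.
have no_stubborn : alpha * fS ord_max = 0 by apply/le_anti; rewrite rate_le0 mulr_ge0.
have mean_const : \forall t \near +oo, m_inf ord_max = mean ord_max t.
  near=> t; rewrite mean_eq; last by near: t; exact: nbhs_pinfty_ge (num_real _).
  rewrite (@eq_Rintegral _ _ _ _ _ (fun=> 0) _) => [|s _]; last first.
    by rewrite forcing_max relax_rate_max no_stubborn !mul0r subr0.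
  rewrite Rintegral_cst // mul0r addr0 minfE /minf_step eqxx /minf_last no_stubborn eqxx.
  by rewrite /mean fNSt0.
exact: cvg_trans (near_eq_cvg mean_const) (cvg_cst _).
Unshelve. all: by end_near.
Qed.

Let mean_cvg i : mean i t @[t --> +oo] --> m_inf i.
Proof. by elim/ord_downward_ind: i => i IH; exact: (mean_cvg_step i IH). Qed.

Let influence_cvg i : influence i t @[t --> +oo] --> f0tail i * m_inf i.
Proof.
under eq_fun do rewrite influence_forcing.
rewrite tail_f0 mulrDl relax_rate_minf //.
apply: cvgD; last by apply: cvgMr; exact: mean_cvg.
by apply: cvg_forcing => j _; exact: mean_cvg.
Qed.

Let moment2_cvg i : moment2 i t @[t --> +oo] --> m_inf i ^+ 2.
Proof.
have f0tail_gt0 : 0 < f0tail i by exact: tail_f0_gt0.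
rewrite (_ : m_inf i ^+ 2 = 2 * (f0tail i * m_inf i) * m_inf i / (2 * f0tail i)); last first.
  by field; rewrite gt_eqF.
apply: integral_linear_ode_cvg (moment2_cont i) _ (moment2_eq i) _ => [|t|].
- by rewrite mulr_gt0.
- by apply: cvgM; [apply: cvgMr; exact: influence_cont | exact: mean_cont].
- by apply: cvgM; [apply: cvgMr; exact: influence_cvg | exact: mean_cvg].
Qed.

Lemma fNSt_cvg_dirac i phi : CIfun phi ->
  integI (fNSt i t) phi @[t --> +oo] --> phi (m_inf i).
Proof. by apply: integI_cvg_dirac; [exact: fNSt_supp | exact: mean_cvg | exact: moment2_cvg]. Qed.

End Convergence.

Theorem theorem4p4 (R : realType) (n : nat) (alpha : R)
  (h : 'I_n.+1 -> R) (fS fNS : 'I_n.+1 -> R) (mS : 'I_n.+1 -> R)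
  (f0NS : 'I_n.+1 -> probability R R)
  (fNSt : 'I_n.+1 -> R -> probability R R) :
  0 <= alpha <= 1 ->
  0 <= h ord0 -> h ord_max <= 1 ->
  (forall i j : 'I_n.+1, (i < j)%N -> h i < h j) ->
  (forall j, 0 <= fS j) -> (forall j, 0 <= fNS j) ->
  \sum_(j < n.+1) fS j = 1 -> \sum_(j < n.+1) fNS j = 1 ->
  0 < alpha * fS ord_max + (1 - alpha) * fNS ord_max ->
  (forall j, -1 <= mS j <= 1) ->
  (forall i, supported_in_I (f0NS i)) ->
  (forall i t, 0 <= t -> supported_in_I (fNSt i t)) ->
  (forall i, fNSt i 0 = f0NS i) ->
  (* continuity of t |-> f^{NS,i}(t) for the weak topology of P([-1,1]) *)
  (forall i phi, CIfun phi ->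
     {within `[0, +oo[%classic, continuous (fun t => integI (fNSt i t) phi)}) ->
  (* weak formulation of the equation *)
  (let f0 := fun j => alpha * fS j + (1 - alpha) * fNS j in
   let mNS := fun j t => integI (fNSt j t) id in
   let beta := fun i t =>
     alpha * tail (fun j => fS j * mS j) i
     + (1 - alpha) * tail (fun j => fNS j * mNS j t) i in
   forall i t phi, 0 <= t -> C1fun phi ->
     integI (fNSt i t) phi =
     integI (f0NS i) phi
     + Rintegral lebesgue_measure `[0, t]%classic
         (fun s => integI (fNSt i s)
                     (fun w => derive1 phi w * (beta i s - tail f0 i * w)))) ->
  let m := minf alpha fS fNS mS (integI (f0NS ord_max) id) in
  (forall i phi, CIfun phi ->
     (fun t => integI (fNSt i t) phi) x @[x --> +oo] --> phi (m i))
  /\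
  ((forall i : 'I_n.+1, i != ord_max -> alpha * fS i = 0) ->
     forall i, m i = m ord_max).
Proof.
move=> alpha_itv _ _ _ fS_ge0 fNS_ge0 _ _ f0_max_gt0 _ _ fNSt_supp fNSt0 fNSt_cont fNSt_weak m.
split; first by move=> i phi; apply: fNSt_cvg_dirac.
exact: minf_const.
Qed.
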